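(* Let $f:\mathbb{Z}^n\to\mathbb{R}\cup\{+\infty\}$ be M-convex, $\emptyset\neq R\subsetneq N$, and $y\in\operatorname{dom} f$. Let $i\in R$ satisfy $f'(y;i,j)>\phi^R(y)$ for every $j\in N\setminus R$, and let $h\in R$, $k\in N\setminus R$ satisfy $f'(y;h,k)=\phi^R(y)$. Then $f'(y+\chi_h-\chi_k;i,j)>\phi^R(y)$ for every $j\in N\setminus R$.
   Context: $N=\{1,\dots,n\}$; $\chi_i\in\{0,1\}^n$ is the $i$-th unit vector. For $f:\mathbb{Z}^n\to\mathbb{R}\cup\{+\infty\}$, $\operatorname{dom} f=\{x\in\mathbb{Z}^n: f(x)<+\infty\}$. $f$ is M-convex if $\operatorname{dom} f\neq\emptyset$ and for all $x,y\in\operatorname{dom} f$ and every $i$ with $x(i)>y(i)$ there is $j$ with $x(j)<y(j)$ such that $f(x)+f(y)\ge f(x-\chi_i+\chi_j)+f(y+\chi_i-\chi_j)$. $f'(x;i,j)=f(x+\chi_i-\chi_j)-f(x)$ (possibly $+\infty$), and $\phi^R(x)=\min_{i\in R,\,j\in N\setminus R}f'(x;i,j)$. *)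

From HB Require Import structures.
From mathcomp Require Import all_boot all_order all_algebra.
From mathcomp Require Import constructive_ereal.
Set Implicit Arguments. Unset Strict Implicit. Unset Printing Implicit Defensive.
Import Order.TTheory GRing.Theory Num.Theory.
Local Open Scope ring_scope.
Local Open Scope ereal_scope.

Notation pt n := {ffun 'I_n -> int}.

Definition chi (n : nat) (i : 'I_n) : pt n := [ffun k => ((k == i) : int)%R].

(* f : Z^n -> R ∪ {+oo} is modelled as f : pt n -> \bar R with f x != -oo for all x *)
Definition dom (R : numDomainType) (n : nat) (f : pt n -> \bar R) (x : pt n) : Prop :=
  f x < +oo.

Definition Mconvex (R : numDomainType) (n : nat) (f : pt n -> \bar R) : Prop :=
  (exists x, dom f x) /\
  forall x y, dom f x -> dom f y ->
    forall i : 'I_n, (y i < x i)%R ->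
      exists2 j : 'I_n, (x j < y j)%R &
        f (x - chi i + chi j)%R + f (y + chi i - chi j)%R <= f x + f y.

Definition fder (R : numDomainType) (n : nat) (f : pt n -> \bar R) (x : pt n) (i j : 'I_n)
  : \bar R := f (x + chi i - chi j)%R - f x.

Definition phiR (R : realDomainType) (n : nat) (f : pt n -> \bar R) (S : {set 'I_n}) (x : pt n)
  : \bar R :=
  \big[mine/+oo]_(i in S) \big[mine/+oo]_(j in ~: S) fder f x i j.

(* Put [y' := y + chi h - chi k] and [z := y' + chi i - chi j]; if the claim
   failed, [f z + f y <= 2 f y'].  Exchanging [i] between [z] and [y] returns
   some [l] in [{k, j}], and [z - chi i + chi l] is [y'] or [y + chi h - chi j],
   both of value at least [f y'] by minimality of [f'(y;h,k)], while
   [f (y + chi i - chi l) > f y'] by the choice of [i]: the exchange inequality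
   is violated. *)

From mathcomp Require Import all_boot all_order all_algebra.
From mathcomp Require Import constructive_ereal.
From mathcomp Require Import zify lra.
Set Implicit Arguments. Unset Strict Implicit. Unset Printing Implicit Defensive.
Import Order.TTheory GRing.Theory Num.Theory.
Local Open Scope ring_scope.
Local Open Scope ereal_scope.

Lemma leeB_midpoint (R : realDomainType) (a b c : \bar R) :
  a \is a fin_num -> b \is a fin_num -> (c - b <= b - a) = (c + a <= b + b).
Proof.
case: a => [a| |] // _; case: b => [b| |] // _.
case: c => [c| |] //=; last by rewrite !leNye.
by rewrite -!EFinD !lee_fin; apply/idP/idP => ?; lra.
Qed.

Section ShiftCoordinates.
Variables (n : nat) (y : pt n) (h k i j : 'I_n).

Lemma shift2_lt_gt : i != k -> i != j -> (y i < (y + chi h - chi k + chi i - chi j) i)%R.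
Proof.
move=> /negbTE ik /negbTE ij; rewrite !ffunE eqxx ik ij.
by move: (y i); case: (i == h) => yi /=; lia.
Qed.

Lemma shift2_lt (l : 'I_n) :
  ((y + chi h - chi k + chi i - chi j) l < y l)%R -> (l == k) || (l == j).
Proof.
rewrite !ffunE; case: (l == k) (l == j) => [] [] //.
by move: (y l); case: (l == h) (l == i) => yl [] /=; lia.
Qed.

End ShiftCoordinates.

Section MconvexExchange.
Variables (R : realDomainType) (n : nat) (f : pt n -> \bar R).

Lemma phiR_le_fder (S : {set 'I_n}) (x : pt n) (p q : 'I_n) :
  p \in S -> q \notin S -> phiR f S x <= fder f x p q.
Proof.
move=> pS qS; apply: le_trans (bigmin_le_cond _ _ pS) _.
by apply: bigmin_le_cond; rewrite inE.
Qed.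

Lemma Mconvex_exchange2 (y : pt n) (h k i j : 'I_n) :
  let z := (y + chi h - chi k + chi i - chi j)%R in
  Mconvex f -> dom f y -> dom f z -> i != k -> i != j ->
  exists2 l, (l == k) || (l == j) &
    f (y + chi i - chi l)%R + f (z - chi i + chi l)%R <= f z + f y.
Proof.
move=> z [_ Mf] dy dz ik ij.
have [l zl] := Mf z y dz dy i (shift2_lt_gt y h ik ij).
by rewrite addeC; exists l; first exact: shift2_lt zl.
Qed.

Hypothesis f_neqNy : forall x, f x != -oo.

Lemma dom_fin_num (x : pt n) : dom f x -> f x \is a fin_num.
Proof. by rewrite /dom fin_numE f_neqNy ltey. Qed.

Lemma lte_fder (x : pt n) : dom f x -> forall p q p' q' : 'I_n,
  (fder f x p q < fder f x p' q') = (f (x + chi p - chi q)%R < f (x + chi p' - chi q')%R).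
Proof. by move=> /dom_fin_num fx p q p' q'; rewrite /fder lteD2rE ?fin_numN. Qed.

Lemma lee_fder (x : pt n) : dom f x -> forall p q p' q' : 'I_n,
  (fder f x p q <= fder f x p' q') = (f (x + chi p - chi q)%R <= f (x + chi p' - chi q')%R).
Proof. by move=> /dom_fin_num fx p q p' q'; rewrite /fder leeD2rE ?fin_numN. Qed.

End MconvexExchange.

Theorem mainTheorem10 (R : realDomainType) (n : nat) (f : {ffun 'I_n -> int} -> \bar R)
  (S : {set 'I_n}) (y : {ffun 'I_n -> int}) (i h k : 'I_n) :
  (forall x, f x != -oo) ->
  Mconvex f ->
  S != set0 -> S != [set: 'I_n] ->
  dom f y ->
  i \in S ->
  (forall j, j \notin S -> phiR f S y < fder f y i j) ->
  h \in S -> k \notin S ->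
  fder f y h k = phiR f S y ->
  forall j, j \notin S -> phiR f S y < fder f (y + chi h - chi k)%R i j.
Proof.
move=> fN Mf _ _ dy iS fi_gt hS kS fhk_min j jS.
set y' := (y + chi h - chi k)%R; set z := (y' + chi i - chi j)%R.
have ik : i != k by apply: contraNneq kS => <-.
have ij : i != j by apply: contraNneq jS => <-.
have y'_lt l : l \notin S -> f y' < f (y + chi i - chi l)%R.
  by move=> lS; rewrite -(lte_fder fN dy) fhk_min; exact: fi_gt.
have fy' : f y' \is a fin_num.
  by apply: (dom_fin_num fN); exact: lt_le_trans (y'_lt k kS) (leey _).
have fy := dom_fin_num fN dy.
rewrite -fhk_min ltNge; apply/negP => fder_z_le.
have dz : dom f z.
  rewrite /dom ltey; apply: contraTneq fder_z_le => fz_oo.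
  by rewrite /fder -/y' -/z fz_oo -(fineK fy) -(fineK fy').
have fz_le : f z + f y <= f y' + f y' by rewrite -leeB_midpoint.
have [l lkj exch] := Mconvex_exchange2 Mf dy dz ik ij.
have lS : l \notin S by case/orP: lkj => /eqP ->.
have fy'_le : f y' <= f (z - chi i + chi l)%R.
  case/orP: lkj => /eqP ->.
    have -> : (z - chi i + chi k = y + chi h - chi j)%R.
      by rewrite (addrAC _ (- chi j)%R) addrK addrAC subrK.
    by rewrite -(lee_fder fN dy) fhk_min; exact: phiR_le_fder.
  by rewrite addrAC subrK addrK.
by have := lt_le_trans (lte_leD fy' (y'_lt l lS) fy'_le) exch; rewrite ltNge fz_le.
Qed.
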